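(* Let $n\geqslant 2$. The set $\{x_1,x_2,\ldots,x_n\}$ generates the monoid $\mathcal{AO}_n$.
   Context: Let $\Omega_n=\{1<2<\cdots<n\}$ and $\mathcal{I}_n$ the monoid of all partial injective maps of $\Omega_n$, composed left to right. $\mathcal{AI}_n$ is the set of all $\alpha\in\mathcal{I}_n$ with $\alpha=\sigma|_{\mathrm{Dom}(\alpha)}$ for some even permutation $\sigma$; $\mathcal{POI}_n$ is the set of order-preserving elements and $\mathcal{AO}_n=\mathcal{AI}_n\cap\mathcal{POI}_n$. Let $X_i=\Omega_n\setminus\{i\}$. For subsets $A,B$ with $|A|=|B|$ there is a unique order-preserving partial permutation with domain $A$ and image $B$. Define $x_1,\dots,x_n$ as the order-preserving partial permutations with: $x_1$: domain $X_1$, image $X_n$ if $n$ is odd and image $X_{n-1}$ if $n$ is even; $x_2$: domain $X_2$, image $X_{n-1}$ if $n$ is odd and image $X_n$ if $n$ is even; $x_i$ ($3\leqslant i\leqslant n$): domain $X_i$, image $X_{i-2}$. *)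

From mathcomp Require Import all_boot all_order all_fingroup.
Set Implicit Arguments. Unset Strict Implicit. Unset Printing Implicit Defensive.

(* Omega_n = {1 < ... < n} is modelled by 'I_n: the ordinal k stands for k+1. *)

Definition pinjmap (n : nat) := {ffun 'I_n -> option 'I_n}.

Definition dom n (f : pinjmap n) : {set 'I_n} := [set x | f x != None].

Definition pinj n (f : pinjmap n) : Prop :=
  forall x y : 'I_n, f x != None -> f x = f y -> x = y.

Definition In_ n (f : pinjmap n) : Prop := pinj f.

(* composition left to right: (f g) x = g (f x) *)
Definition pcomp n (f g : pinjmap n) : pinjmap n := [ffun x => obind g (f x)].
Definition pid n : pinjmap n := [ffun x => Some x].

Definition AI n (f : pinjmap n) : Prop :=
  In_ f /\ exists s : 'S_n, ~~ odd_perm s /\ forall x, x \in dom f -> f x = Some (s x).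

Definition POI n (f : pinjmap n) : Prop :=
  In_ f /\ forall x y : 'I_n, forall fx fy : 'I_n,
    f x = Some fx -> f y = Some fy -> x <= y -> fx <= fy.

Definition AO n (f : pinjmap n) : Prop := AI f /\ POI f.

Definition Xset n (k : nat) : {set 'I_n} := [set x : 'I_n | x.+1 != k].

(* the order-preserving partial permutation with domain A and image B
   (for |A| = |B|): the j-th smallest element of A goes to the j-th
   smallest element of B (enum of a set of ordinals is increasing). *)
Definition opp n (A B : {set 'I_n}) : pinjmap n :=
  [ffun x => if x \in A then Some (nth x (enum B) (index x (enum A))) else None].

Definition gen_target (n i : nat) : nat :=
  if i == 1 then (if odd n then n else n - 1)
  else if i == 2 then (if odd n then n - 1 else n)
  else i - 2.

Definition gen n (i : nat) : pinjmap n := opp (Xset n i) (Xset n (gen_target n i)).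

Definition word_prod n (s : seq nat) : pinjmap n :=
  foldl (@pcomp n) (pid n) [seq gen n i | i <- s].

Arguments word_prod : clear implicits.
Arguments gen : clear implicits.
Arguments pid : clear implicits.

From mathcomp Require Import all_boot all_order all_fingroup zify.
Set Implicit Arguments. Unset Strict Implicit. Unset Printing Implicit Defensive.

(* An order-preserving partial injection is determined by its domain and image.
   With 0-based indices, each generator is the order-preserving bijection from
   X_(a+1) onto X_(b+1) for some a, b with a + b even, and these bijections
   compose to all such ones.  An element of AO_n of defect one is such a
   bijection, and its only extension to a permutation is a cycle of parity
   a + b, so a + b must be even.  For defect at least two, restricting these
   bijections slides the domain (or the image) downwards; descending on the
   total weight, any two sets of equal size with two holes are joined by a
   product of generators, the second hole giving the needed freedom of parity. *)

Lemma eq_perm_but1 (T : finType) (s t : {perm T}) a :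
  (forall x, x != a -> s x = t x) -> s = t.
Proof.
move=> st; apply/permP => x; case: (eqVneq x a) => [->|]; last exact: st.
set z := (s^-1)%g (t a); have sz : s z = t a by rewrite permKV.
case: (z =P a) => [za|/eqP za]; first by rewrite -{1}za sz.
by have zEa := perm_inj (etrans (esym (st z za)) sz); rewrite zEa eqxx in za.
Qed.

Section PartialInjections.
Variable n : nat.
Implicit Types (f g h : pinjmap n) (A B : {set 'I_n}) (a b c x y : 'I_n).

Definition img f : {set 'I_n} := [set y | [exists x, f x == Some y]].

Lemma imgP f y : reflect (exists x, f x = Some y) (y \in img f).
Proof.
rewrite inE; apply: (iffP existsP) => [[x /eqP]|[x fx]]; exists x => //.
by rewrite fx.
Qed.

Lemma domP f x : reflect (exists y, f x = Some y) (x \in dom f).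
Proof. by rewrite inE; case: (f x) => [y|]; constructor; [exists y | case]. Qed.

Lemma pcompA f g h : pcomp f (pcomp g h) = pcomp (pcomp f g) h.
Proof. by apply/ffunP => x; rewrite !ffunE; case: (f x) => //= y; rewrite ffunE. Qed.

Lemma pcompf1 f : pcomp f (pid n) = f.
Proof. by apply/ffunP => x; rewrite !ffunE; case: (f x) => //= y; rewrite ffunE. Qed.

Lemma pcomp1f f : pcomp (pid n) f = f.
Proof. by apply/ffunP => x; rewrite !ffunE. Qed.

Lemma dom_pcomp f g : img f \subset dom g -> dom (pcomp f g) = dom f.
Proof.
move=> /subsetP fg; apply/setP => x; rewrite !inE ffunE.
case fx: (f x) => [y|] //=.
by have /domP[z ->] : y \in dom g by apply: fg; apply/imgP; exists x.
Qed.

Lemma img_pcomp f g : dom g \subset img f -> img (pcomp f g) = img g.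
Proof.
move=> /subsetP gf; apply/setP => z; apply/imgP/imgP => [[x]|[y gy]].
  by rewrite ffunE; case: (f x) => //= y gy; exists y.
have /imgP[x fx] : y \in img f by apply: gf; apply/domP; exists z.
by exists x; rewrite ffunE fx.
Qed.

Lemma pinj_pcomp f g : pinj f -> pinj g -> pinj (pcomp f g).
Proof.
move=> injf injg x y; rewrite !ffunE.
case fx: (f x) => [u|] //; case fy: (f y) => [v|] /= gu guv; last by rewrite guv in gu.
by apply: injf; rewrite fx // fy (injg _ _ gu guv).
Qed.

Lemma POI_pcomp f g : POI f -> POI g -> POI (pcomp f g).
Proof.
move=> [injf monof] [injg monog]; split; first exact: pinj_pcomp.
move=> x y fx' fy'; rewrite !ffunE.
case fx: (f x) => [u|] //=; case fy: (f y) => [v|] //= gu gv xy.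
exact: monog gu gv (monof _ _ _ _ fx fy xy).
Qed.

Lemma AI_pcomp f g : AI f -> AI g -> AI (pcomp f g).
Proof.
move=> [injf [s [evs fs]]] [injg [t [evt gt]]]; split; first exact: pinj_pcomp.
exists (s * t)%g; split; first by rewrite odd_permM (negbTE evs) (negbTE evt).
move=> x /domP[w]; rewrite !ffunE permM; case fx: (f x) => [u|] //= gu.
have [<-] : Some u = Some (s x) by rewrite -fx fs //; apply/domP; exists u.
by apply: gt; apply/domP; exists w.
Qed.

Lemma AO_pcomp f g : AO f -> AO g -> AO (pcomp f g).
Proof. by move=> [AIf POIf] [AIg POIg]; split; [apply: AI_pcomp | apply: POI_pcomp]. Qed.

Lemma AO_pid : AO (pid n).
Proof.
have injid : pinj (pid n) by move=> x y; rewrite !ffunE => _ [].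
split; split => //.
  by exists 1%g; split => [|x _]; rewrite ?odd_perm1 // ffunE perm1.
by move=> x y fx fy; rewrite !ffunE => -[<-] [<-].
Qed.

(** * Uniqueness of order-preserving maps *)

Definition rank_in A y := #|[set z in A | z < y]|.

Lemma rank_in_inj A : {in A &, injective (rank_in A)}.
Proof.
suff lt_rank y1 y2 : y1 \in A -> y1 < y2 -> rank_in A y1 < rank_in A y2.
  move=> y1 y2 A1 A2 eq12; apply: val_inj; case: (ltngtP y1 y2) => // lt.
    by have := lt_rank _ _ A1 lt; rewrite eq12 ltnn.
  by have := lt_rank _ _ A2 lt; rewrite eq12 ltnn.
move=> A1 lt12; apply: proper_card; apply/properP; split.
  by apply/subsetP => z; rewrite !inE => /andP[-> /ltn_trans]; apply.
by exists y1; rewrite !inE ?A1 ?lt12 ?ltnn.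
Qed.

Lemma img_imset f : img f = [set odflt x (f x) | x in dom f].
Proof.
apply/setP => y; apply/imgP/imsetP => [[x fx]|[x /domP[u fx] ->]].
  by exists x; [apply/domP; exists y | rewrite fx].
by exists x; rewrite fx.
Qed.

Lemma pinj_odflt f : pinj f -> {in dom f &, injective (fun x => odflt x (f x))}.
Proof.
move=> injf x y /domP[u fx] /domP[v fy] /=.
by rewrite fx fy /= => uv; apply: injf; rewrite fx // fy uv.
Qed.

Lemma card_img f : pinj f -> #|img f| = #|dom f|.
Proof. by move=> injf; rewrite img_imset card_in_imset //; apply: pinj_odflt. Qed.

Lemma rank_img f x y : POI f -> f x = Some y -> rank_in (img f) y = rank_in (dom f) x.
Proof.
move=> [injf monof] fx; rewrite /rank_in.
have -> : [set z in img f | z < y] = [set odflt z (f z) | z in [set z in dom f | z < x]].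
  apply/setP => w; rewrite inE; apply/andP/imsetP.
    move=> [/imgP[z fz] wy]; exists z; last by rewrite fz.
    rewrite !inE; apply/andP; split; first by rewrite fz.
    by rewrite ltnNge; apply: contraL wy => /(monof _ _ _ _ fx fz); rewrite -leqNgt.
  move=> [z]; rewrite inE => /andP[/domP[u fz] zx] ->; rewrite fz /=.
  split; first by apply/imgP; exists z.
  rewrite ltn_neqAle (monof _ _ _ _ fz fx (ltnW zx)) andbT.
  apply: contraTneq zx => uy; suff -> : z = x by rewrite ltnn.
  by apply: injf; rewrite fz // fx; congr Some; apply: val_inj.
rewrite card_in_imset //; apply: sub_in2 (pinj_odflt injf) => z.
by rewrite inE => /andP[].
Qed.

Lemma POI_eq f g : POI f -> POI g -> dom f = dom g -> img f = img g -> f = g.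
Proof.
move=> POIf POIg domfg imgfg; apply/ffunP => x.
have := congr1 (fun D : {set _} => x \in D) domfg; rewrite /= !inE.
case fx: (f x) => [y|]; case gx: (g x) => [y'|] // _.
congr Some; apply: (@rank_in_inj (img f)).
- by apply/imgP; exists x.
- by rewrite imgfg; apply/imgP; exists x.
- by rewrite (rank_img POIf fx) domfg imgfg (rank_img POIg gx).
Qed.

Lemma sorted_enum_set A : sorted (fun x y : 'I_n => x < y) (enum A).
Proof.
rewrite /enum_mem -enumT; apply: sorted_filter; first exact: ltn_trans.
by have := iota_ltn_sorted 0 n; rewrite -val_enum_ord sorted_map.
Qed.

Lemma nth_enum_set_lt A x0 y0 i j : i < j < #|A| -> nth x0 (enum A) i < nth y0 (enum A) j.
Proof.
move=> /andP[ij jA]; have iA := ltn_trans ij jA; rewrite cardE in iA jA.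
rewrite [nth y0 _ j](set_nth_default x0) //.
exact: (sorted_ltn_nth (fun y x z => @ltn_trans y x z) x0 (sorted_enum_set A)).
Qed.

Lemma dom_opp A B : dom (opp A B) = A.
Proof. by apply/setP => x; rewrite inE ffunE; case: (x \in A). Qed.

Lemma POI_opp A B : #|A| = #|B| -> POI (opp A B).
Proof.
have index_lt x : x \in A -> index x (enum A) < #|A| by rewrite cardE index_mem mem_enum.
move=> AB; split.
  move=> x y; rewrite !ffunE; case: ifP => xA //; case: ifP => yA // _ [].
  rewrite (set_nth_default x y) -?cardE -?AB ?index_lt // => /eqP.
  rewrite nth_uniq ?enum_uniq -?cardE -?AB ?index_lt // => /eqP xy.
  by apply: (@index_inj _ x (enum A)); rewrite ?mem_enum.
move=> x y fx fy; rewrite !ffunE; case: ifP => xA //; case: ifP => yA // [<-] [<-] xy.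
case: (ltngtP (index x (enum A)) (index y (enum A))) => [lt|gt|->].
- by rewrite ltnW // nth_enum_set_lt // lt -AB index_lt.
- have : nth x (enum A) (index y (enum A)) < nth y (enum A) (index x (enum A)).
    by rewrite nth_enum_set_lt // gt index_lt.
  by rewrite !nth_index ?mem_enum // ltnNge xy.
- by rewrite (set_nth_default x y) // -cardE -AB index_lt.
Qed.

Lemma img_opp A B : #|A| = #|B| -> img (opp A B) = B.
Proof.
move=> AB; apply/eqP; rewrite eqEcard card_img; last exact: (POI_opp AB).1.
rewrite dom_opp AB leqnn andbT.
apply/subsetP => y /imgP[x]; rewrite ffunE; case: ifP => // xA [<-].
by rewrite -mem_enum mem_nth // -cardE -AB cardE index_mem mem_enum.
Qed.

(** * Slides *)

Definition slide (a b x : nat) : nat :=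
  if a < b then (if a < x <= b then x.-1 else x)
  else if b <= x < a then x.+1 else x.

Local Ltac slide_lia := rewrite /slide; repeat case: ifP; lia.

Lemma slide_lt a b x : slide a b x < n.
Proof. by have := ltn_ord a; have := ltn_ord b; have := ltn_ord x; slide_lia. Qed.

Definition slide_ord a b x : 'I_n := Ordinal (slide_lt a b x).

Lemma slide_ord_neq a b x : x != a -> slide_ord a b x != b.
Proof. by rewrite -!val_eqE /=; slide_lia. Qed.

Lemma slide_ord_lt a b x y : x != a -> y != a -> x < y -> slide_ord a b x < slide_ord a b y.
Proof. by rewrite -!val_eqE /=; slide_lia. Qed.

Lemma slide_ord_inj a b x y : x != a -> y != a -> slide_ord a b x = slide_ord a b y -> x = y.
Proof.
rewrite -!val_eqE => xa ya /(congr1 val) /= eq.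
by apply: val_inj; move: xa ya eq => /=; slide_lia.
Qed.

Lemma slide_ord_trans a b c x : x != a -> slide_ord b c (slide_ord a b x) = slide_ord a c x.
Proof. by rewrite -val_eqE => xa; apply: val_inj; move: xa => /=; slide_lia. Qed.

Lemma slide_ordK a b x : x != a -> slide_ord b a (slide_ord a b x) = x.
Proof. by rewrite -val_eqE => xa; apply: val_inj; move: xa => /=; slide_lia. Qed.

Lemma slide_ord_id a x : slide_ord a a x = x.
Proof. by apply: val_inj => /=; slide_lia. Qed.

(* With 0-based ordinals, [pslide a b] is the order-preserving bijection from
   X_(a+1) onto X_(b+1). *)
Definition pslide a b : pinjmap n :=
  [ffun x => if x == a then None else Some (slide_ord a b x)].

Lemma dom_pslide a b : dom (pslide a b) = [set~ a].
Proof. by apply/setP => x; rewrite !inE ffunE; case: (x == a). Qed.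

Lemma POI_pslide a b : POI (pslide a b).
Proof.
split=> [x y|x y fx fy]; rewrite !ffunE; case: ifP => xa //; case: ifP => ya //.
  by move=> _ [xy]; apply: (@slide_ord_inj a b); rewrite ?xa ?ya //; apply: val_inj.
move=> [<-] [<-]; rewrite leq_eqVlt => /orP[/eqP/val_inj -> //|xy].
by rewrite ltnW // slide_ord_lt ?xa ?ya.
Qed.

Lemma img_pslide a b : img (pslide a b) = [set~ b].
Proof.
apply/eqP; rewrite eqEcard card_img; last exact: (POI_pslide a b).1.
rewrite dom_pslide !cardsC1 leqnn andbT.
apply/subsetP => y /imgP[x]; rewrite ffunE; case: ifP => // xa [<-].
by rewrite !inE slide_ord_neq ?xa.
Qed.

Lemma pslide_trans a b c : pcomp (pslide a b) (pslide b c) = pslide a c.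
Proof.
apply/ffunP => x; rewrite !ffunE; case: ifP => //= xa.
by rewrite ffunE (negbTE (slide_ord_neq _ _)) ?xa // slide_ord_trans ?xa.
Qed.

(* A cycle on the interval between a and b, sending a to b. *)
Definition slide_fun a b x := if x == a then b else slide_ord a b x.

Lemma slide_fun_inj a b : injective (slide_fun a b).
Proof.
move=> x y; rewrite /slide_fun; case: ifP => xa; case: ifP => ya.
- by rewrite (eqP xa) (eqP ya).
- by move=> bE; have := slide_ord_neq b (negbT ya); rewrite -bE eqxx.
- by move=> bE; have := slide_ord_neq b (negbT xa); rewrite bE eqxx.
- by apply: slide_ord_inj; rewrite ?xa ?ya.
Qed.

Definition slide_perm a b : {perm 'I_n} := perm (@slide_fun_inj a b).

Lemma pslide_perm a b x : x != a -> pslide a b x = Some (slide_perm a b x).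
Proof. by move=> xa; rewrite ffunE permE /slide_fun (negbTE xa). Qed.

Lemma slide_perm_id a : slide_perm a a = 1%g.
Proof. by apply/permP => x; rewrite permE perm1 /slide_fun slide_ord_id; case: eqP => [->|]. Qed.

Lemma slide_permV a b : (slide_perm a b * slide_perm b a)%g = 1%g.
Proof.
apply/permP => x; rewrite permM perm1 !permE /slide_fun.
case: (eqVneq x a) => [->|xa]; first by rewrite !eqxx.
by rewrite (negbTE (slide_ord_neq _ xa)) slide_ordK.
Qed.

Lemma slide_permS a b b' : a <= b -> val b' = b.+1 ->
  slide_perm a b' = (slide_perm a b * tperm b b')%g.
Proof.
move=> ab b'E; apply/permP => x.
rewrite permM [slide_perm a b' x]permE [slide_perm a b x]permE /slide_fun.
case: (eqVneq x a) => [_|xa]; first by rewrite tpermL.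
move: xa; rewrite -val_eqE /= => xa; apply: val_inj.
case: tpermP => [/(congr1 val)|/(congr1 val)|/eqP + /eqP]; rewrite /= -?val_eqE /= b'E; slide_lia.
Qed.

Lemma odd_slide_perm a b : odd_perm (slide_perm a b) = odd (a + b).
Proof.
wlog ab : a b / a <= b => [wlog_ab|].
  case: (leqP a b) => [|/ltnW ba]; first exact: wlog_ab.
  have := congr1 (@odd_perm _) (slide_permV b a).
  by rewrite odd_permM odd_perm1 wlog_ab // addnC; case: odd_perm; case: odd.
have [k] : exists k, b = a + k :> nat by exists (b - a); lia.
elim: k b ab => [|k IH] b ab bk.
  have -> : b = a by apply: val_inj; rewrite /= bk addn0.
  by rewrite slide_perm_id odd_perm1 addnn odd_double.
have bk' : a + k < n by have := ltn_ord b; lia.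
rewrite (@slide_permS a (Ordinal bk') b) /= ?odd_permM ?IH ?odd_tperm -?val_eqE /=; lia.
Qed.

Lemma AO_pslide a b : AO (pslide a b) <-> ~~ odd (a + b).
Proof.
split=> [[[_ [s [even_s sE]]] _] | even_ab].
  suff sE' : s = slide_perm a b by rewrite -odd_slide_perm -sE'.
  apply: eq_perm_but1 (a) _ => x xa; apply: Some_inj.
  by rewrite -pslide_perm // sE // dom_pslide !inE.
split; last exact: POI_pslide.
split; first exact: (POI_pslide a b).1.
exists (slide_perm a b); split; first by rewrite odd_slide_perm.
by move=> x; rewrite dom_pslide !inE => xa; rewrite pslide_perm.
Qed.

(** * Words in the generators *)

Definition generated f := exists s, all (fun i => 1 <= i <= n) s /\ f = word_prod n s.

Lemma foldl_pcomp f fs : foldl (@pcomp n) f fs = pcomp f (foldl (@pcomp n) (pid n) fs).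
Proof.
elim: fs f => [|g fs IH] f /=; first by rewrite pcompf1.
by rewrite IH [in RHS]IH pcomp1f pcompA.
Qed.

Lemma word_prod_cat s t : word_prod n (s ++ t) = pcomp (word_prod n s) (word_prod n t).
Proof. by rewrite /word_prod map_cat foldl_cat foldl_pcomp. Qed.

Lemma word_prod1 i : word_prod n [:: i] = gen n i.
Proof. by rewrite /word_prod /= pcomp1f. Qed.

Lemma generated_pcomp f g : generated f -> generated g -> generated (pcomp f g).
Proof.
move=> [s [s_ok ->]] [t [t_ok ->]]; exists (s ++ t).
by rewrite all_cat s_ok t_ok word_prod_cat.
Qed.

Lemma generated_gen i : 1 <= i <= n -> generated (gen n i).
Proof. by move=> i_ok; exists [:: i]; rewrite /= i_ok word_prod1. Qed.

Lemma Xset_setC1 k a : 0 < k -> a = k.-1 :> nat -> Xset n k = [set~ a].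
Proof. by move=> k_gt0 ak; apply/setP => x; rewrite !inE -val_eqE /= ak; lia. Qed.

Lemma gen_pslide i a b : 1 <= i <= n -> a = i.-1 :> nat -> b = (gen_target n i).-1 :> nat ->
  gen n i = pslide a b.
Proof.
move=> /andP[i_gt0 i_le] ai bt.
have t_gt0 : 0 < gen_target n i by rewrite /gen_target; repeat case: ifP; lia.
rewrite /gen (Xset_setC1 i_gt0 ai) (Xset_setC1 t_gt0 bt).
have cardAB : #|[set~ a]| = #|[set~ b]| by rewrite !cardsC1.
apply: POI_eq (POI_opp cardAB) (POI_pslide a b) _ _.
  by rewrite dom_opp dom_pslide.
by rewrite img_opp // img_pslide.
Qed.

Lemma AO_gen i : 1 <= i <= n -> AO (gen n i).
Proof.
move=> i_ok; have a_lt : i.-1 < n by lia.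
have b_lt : (gen_target n i).-1 < n by rewrite /gen_target; repeat case: ifP; lia.
rewrite (@gen_pslide i (Ordinal a_lt) (Ordinal b_lt)) // AO_pslide /=.
by rewrite /gen_target; repeat case: ifP; lia.
Qed.

Lemma AO_generated f : generated f -> AO f.
Proof.
move=> [s [s_ok ->]]; elim: s s_ok => [_|i s IH] /=; first exact: AO_pid.
move=> /andP[i_ok s_ok]; rewrite -cat1s word_prod_cat word_prod1.
exact: AO_pcomp (AO_gen i_ok) (IH s_ok).
Qed.

Lemma generated_pslide2 a b : a = b + 2 :> nat -> generated (pslide a b).
Proof.
move=> ab; have := ltn_ord a; rewrite ab => b_lt.
by rewrite -(@gen_pslide b.+3 a b) //=; [apply: generated_gen | ..]; lia.
Qed.

Lemma generated_pslide_down k a b : a = b + 2 * k.+1 :> nat -> generated (pslide a b).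
Proof.
elim: k a => [|k IH] a ab; first by apply: generated_pslide2; lia.
have c_lt : b + 2 * k.+1 < n by have := ltn_ord a; lia.
rewrite -(pslide_trans a (Ordinal c_lt) b); apply: generated_pcomp.
  by apply: generated_pslide2 => /=; lia.
exact: IH.
Qed.

(* x_1 and x_2 send p to the largest index t of the parity of p; from t the
   generators x_i, i >= 3, descend to b. *)
Lemma generated_pslide_low (p : 'I_n) b : p < 2 -> ~~ odd (p + b) -> generated (pslide p b).
Proof.
move=> p_lt2 even_pb; have := ltn_ord p; have := ltn_ord b => b_lt p_lt.
have t_lt : (gen_target n p.+1).-1 < n by rewrite /gen_target; repeat case: ifP; lia.
set t := Ordinal t_lt.
have gen_p : gen n p.+1 = pslide p t by apply: gen_pslide => //; lia.
have gen_pt : generated (pslide p t) by rewrite -gen_p; apply: generated_gen; lia.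
have [<-|tb] := eqVneq t b; first exact: gen_pt.
rewrite -(pslide_trans p t b); apply: generated_pcomp gen_pt _.
apply: (@generated_pslide_down ((t - b) %/ 2).-1); move: tb.
by rewrite -val_eqE /= /gen_target; repeat case: ifP; lia.
Qed.

Lemma generated_pslide a b : ~~ odd (a + b) -> generated (pslide a b).
Proof.
move=> even_ab; have [a_lt2|a_ge2] := ltnP a 2; first exact: generated_pslide_low.
have p_lt : a %% 2 < n by have := ltn_ord a; lia.
rewrite -(pslide_trans a (Ordinal p_lt) b); apply: generated_pcomp.
  by apply: (@generated_pslide_down ((a - 2) %/ 2)) => /=; lia.
by apply: generated_pslide_low => /=; lia.
Qed.

(** * Descent *)

Definition pid_on A : pinjmap n := [ffun x => if x \in A then Some x else None].

Lemma dom_pid_on A : dom (pid_on A) = A.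
Proof. by apply/setP => x; rewrite inE ffunE; case: (x \in A). Qed.

Lemma img_pid_on A : img (pid_on A) = A.
Proof.
apply/setP => y; apply/imgP/idP => [[x]|yA]; last by exists y; rewrite ffunE yA.
by rewrite ffunE; case: ifP => // xA [<-].
Qed.

Lemma pid_onI A B : pid_on (A :&: B) = pcomp (pid_on A) (pid_on B).
Proof. by apply/ffunP => x; rewrite !ffunE inE; case: (x \in A) => //=; rewrite ffunE. Qed.

Lemma pid_on_setC1 a : pid_on [set~ a] = pslide a a.
Proof. by apply/ffunP => x; rewrite !ffunE !inE slide_ord_id; case: (x == a). Qed.

Lemma generated_pid_on A : 0 < #|~: A| -> generated (pid_on A).
Proof.
have generated_setC1 a : generated (pid_on [set~ a]).
  by rewrite pid_on_setC1; apply: generated_pslide; rewrite addnn odd_double.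
rewrite lt0n => /eqP; case cA: #|~: A| => [//|k] _.
elim: k A cA => [|k IH] A cA.
  by have /cards1P[a aA] := introT eqP cA; rewrite -[A]setCK aA.
have [a aA] : exists a, a \in ~: A by apply/set0Pn; rewrite -card_gt0 cA.
have -> : A = (a |: A) :&: [set~ a].
  apply/setP => x; rewrite !inE; have [->|_] /= := eqVneq x a; last by rewrite andbT.
  by apply/negbTE; rewrite -in_setC.
rewrite pid_onI; apply: generated_pcomp (IH _ _) (generated_setC1 a).
by rewrite setCU setIC -setDE; have := cardsD1 a (~: A); rewrite aA cA add1n => -[].
Qed.

Lemma card_setC_eq A B : #|A| = #|B| -> #|~: A| = #|~: B|.
Proof. by move=> AB; have := cardsC A; have := cardsC B; lia. Qed.

Lemma card_slide A a b : a \notin A -> #|slide_ord a b @: A| = #|A|.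
Proof.
move=> aA; rewrite card_in_imset // => x y xA yA.
by apply: slide_ord_inj; [apply: contraNneq aA => <- | apply: contraNneq aA => <-].
Qed.

Lemma slideK_imset A a b : a \notin A -> slide_ord b a @: (slide_ord a b @: A) = A.
Proof.
move=> aA; rewrite -imset_comp -[RHS]imset_id; apply: eq_in_imset => x xA /=.
by rewrite slide_ordK //; apply: contraNneq aA => <-.
Qed.

Definition linked A B := exists g, [/\ generated g, dom g = A & img g = B].

Lemma linked_trans A B C : linked A B -> linked B C -> linked A C.
Proof.
move=> [g [gen_g dg ig]] [h [gen_h dh ih]]; have gh : img g = dom h by rewrite ig dh.
exists (pcomp g h); split; first exact: generated_pcomp.
  by rewrite dom_pcomp // gh subxx.
by rewrite img_pcomp // gh subxx.
Qed.

Lemma linked_refl A : 0 < #|~: A| -> linked A A.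
Proof.
by exists (pid_on A); split; [exact: generated_pid_on | exact: dom_pid_on | exact: img_pid_on].
Qed.

Lemma linked_slide A a b : a \notin A -> ~~ odd (a + b) -> linked A (slide_ord a b @: A).
Proof.
move=> aA even_ab; exists (pcomp (pid_on A) (pslide a b)); split.
- apply: generated_pcomp (generated_pid_on _) (generated_pslide even_ab).
  by apply/card_gt0P; exists a; rewrite inE.
- by rewrite dom_pcomp ?dom_pid_on // img_pid_on dom_pslide subsetC sub1set inE.
- apply/setP => y; apply/imgP/imsetP => [[x]|[x xA ->]].
    by rewrite !ffunE; case: ifP => // xA /=; rewrite ffunE; case: ifP => // _ [<-]; exists x.
  by exists x; rewrite !ffunE xA /= ffunE ifN //; apply: contraNneq aA => <-.
Qed.

Lemma linked_slide_inv A a b : a \notin A -> ~~ odd (a + b) -> linked (slide_ord a b @: A) A.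
Proof.
move=> aA even_ab; rewrite -{2}(slideK_imset b aA); apply: linked_slide; last by rewrite addnC.
apply/imsetP => -[x xA bE]; have xa : x != a by apply: contraNneq aA => <-.
by have := slide_ord_neq b xa; rewrite -bE eqxx.
Qed.

Definition weight A := \sum_(x in A) (x : nat).

Definition lowering A a b :=
  [/\ a \notin A, a < b, ~~ odd (a + b) & exists2 y, y \in A & a < y <= b].

Lemma weight_slide A a b : lowering A a b -> weight (slide_ord a b @: A) < weight A.
Proof.
move=> [aA ab _ [y yA /andP[ay yb]]]; rewrite /weight big_imset /=; last first.
  by move=> x z xA zA; apply: slide_ord_inj; apply: contraNneq aA => <-.
rewrite (bigD1 y) //= [X in _ < X](bigD1 y) //= -addSn.
apply: leq_add; first by rewrite /slide ab ay yb /=; lia.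
by apply: leq_sum => x _; rewrite /slide ab; case: ifP => //; lia.
Qed.

Lemma lowering_between A lo hi y : lo \notin A -> hi \notin A -> y \in A ->
  lo < hi < y -> odd (lo + y) -> odd (hi + y) -> exists a b, lowering A a b.
Proof.
move=> loA hiA yA /andP[lohi hiy] odd_lo odd_hi.
have [z /andP[zA z_in]|no_z] := pickP [pred z | (z \in A) && (lo < z <= hi)].
  by exists lo, hi; split => //; [lia | exists z].
have lo1_lt : lo.+1 < n by have := ltn_ord y; lia.
exists (Ordinal lo1_lt), y; split => /=; [|lia|lia|by exists y => //; lia].
by have := no_z (Ordinal lo1_lt); rewrite /= ltnSn lohi !andbT => ->.
Qed.

(* Only the parity of a0 + y0 can fail; when y0 is the last point, a second
   hole c repairs it. *)
Lemma lowering_exists A a0 y0 : 1 < #|~: A| -> a0 \notin A -> y0 \in A -> a0 < y0 ->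
  exists a b, lowering A a b.
Proof.
move=> holes a0A y0A a0y0.
case odd_a0y0: (odd (a0 + y0)); last by exists a0, y0; split => //; [lia | exists y0 => //; lia].
have [y1_lt|y0_max] := ltnP y0.+1 n.
  by exists a0, (Ordinal y1_lt); split => //=; [lia | lia | exists y0 => //=; lia].
have [c] : exists c, c \in ~: A :\ a0.
  apply/set0Pn; rewrite -card_gt0; move: holes.
  by rewrite [#|~: A|](cardsD1 a0) in_setC a0A add1n ltnS.
rewrite !inE => /andP[c_a0 cA]; have cy0 : c < y0.
  have := ltn_ord c; suff : c != y0 :> nat by lia.
  by rewrite val_eqE; apply: contraNneq cA => ->.
case odd_cy0: (odd (c + y0)); last by exists c, y0; split => //; [lia | exists y0 => //; lia].
case: (ltngtP a0 c) => [a0c|ca0|/val_inj a0E]; last by rewrite a0E eqxx in c_a0.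
- by apply: (@lowering_between A a0 c y0) => //; apply/andP.
- by apply: (@lowering_between A c a0 y0) => //; apply/andP.
Qed.

Definition has_gap A := [exists a, exists y, [&& a \notin A, y \in A & a < y]].

Lemma gapless_eq A B : ~~ has_gap A -> ~~ has_gap B -> #|A| = #|B| -> A = B.
Proof.
move=> /existsPn gapA /existsPn gapB AB; apply/eqP; rewrite eqEcard AB leqnn andbT.
apply/subsetP => x xA; apply/negPn/negP => xB.
have /subsetPn[y yB yA] : ~~ (B \subset A).
  apply: contra xB => BA; suff -> : B = A by [].
  by apply/eqP; rewrite eqEcard BA AB leqnn.
have := gapB x; have := gapA y; move=> /existsPn/(_ x) + /existsPn/(_ y).
rewrite xA xB yA yB /= -!leqNgt => xy yx.
have xEy : x = y by apply: val_inj; apply/eqP; rewrite eqn_leq xy yx.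
by rewrite xEy yB in xB.
Qed.

(* Descend on the total weight until A and B are both initial segments. *)
Lemma linked_all A B : #|A| = #|B| -> 1 < #|~: A| -> linked A B.
Proof.
move=> AB cA; have [m wAB] := ubnP (weight A + weight B).
elim: m => // m IH in A B AB cA wAB *.
have cB : 1 < #|~: B| by rewrite -(card_setC_eq AB).
have [/existsP[a0 /existsP[y0 /and3P[a0A y0A a0y0]]]|gapA] := boolP (has_gap A).
  have [a [b lowA]] := lowering_exists cA a0A y0A a0y0; have [aA _ even_ab _] := lowA.
  apply: linked_trans (linked_slide aA even_ab) (IH _ _ _ _ _).
  - by rewrite card_slide.
  - by rewrite (card_setC_eq (card_slide b aA)).
  - by have := weight_slide lowA; lia.
have [/existsP[a0 /existsP[y0 /and3P[a0B y0B a0y0]]]|gapB] := boolP (has_gap B).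
  have [a [b lowB]] := lowering_exists cB a0B y0B a0y0; have [aB _ even_ab _] := lowB.
  apply: linked_trans (IH _ _ _ cA _) (linked_slide_inv aB even_ab).
  - by rewrite card_slide.
  - by have := weight_slide lowB; lia.
by rewrite (gapless_eq gapA gapB AB); apply: linked_refl; apply: ltnW.
Qed.

Lemma POI_total f : POI f -> #|~: dom f| = 0 -> f = pid n.
Proof.
move=> POIf /cards0_eq/(congr1 (@setC _)); rewrite setCK setC0 => domT.
have imgT : img f = setT.
  by apply/eqP; rewrite eqEcard subsetT card_img ?domT ?leqnn //; case: POIf.
apply: POI_eq POIf AO_pid.2 _ _.
  by rewrite domT; apply/setP => x; rewrite !inE ffunE.
by rewrite imgT; apply/setP => y; rewrite inE; apply/esym/imgP; exists y; rewrite ffunE.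
Qed.

Lemma POI_defect1 f : POI f -> #|~: dom f| = 1 -> exists a b, f = pslide a b.
Proof.
move=> POIf /eqP /cards1P[a domC].
have /cards1P[b imgC] : #|~: img f| == 1.
  by rewrite (card_setC_eq (card_img POIf.1)) domC cards1.
exists a, b; apply: POI_eq POIf (POI_pslide a b) _ _.
  by rewrite dom_pslide -domC setCK.
by rewrite img_pslide -imgC setCK.
Qed.

End PartialInjections.

Theorem proposition4p7 (n : nat) : 2 <= n ->
  forall f : pinjmap n,
    AO f <-> exists s : seq nat, all (fun i => (1 <= i <= n)) s /\ f = word_prod n s.
Proof.
move=> _ f; split; last exact: AO_generated.
move=> AOf; have POIf := AOf.2.
have [defect_ge2|] := ltnP 1 #|~: dom f|.
  have [g [gen_g dom_g img_g]] := linked_all (esym (card_img POIf.1)) defect_ge2.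
  by rewrite (POI_eq POIf (AO_generated gen_g).2 (esym dom_g) (esym img_g)).
rewrite leq_eqVlt ltnS leqn0 => /orP[/eqP defect1 | /eqP defect0].
  have [a [b fE]] := POI_defect1 POIf defect1.
  by rewrite fE; apply: generated_pslide; rewrite -AO_pslide -fE.
by exists [::]; rewrite (POI_total POIf defect0).
Qed.
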